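(* Let $s\le L$ be positive integers, $\mathbf{D}\in\mathbb{R}^{N\times N}$, $\mathbf{H}\in\mathbb{R}^{N\times L}$, $\mathbf{A}\in\mathbb{R}^{m\times N}$ with $m<N$, and consider the system $\mathbf{x}_k=\mathbf{D}\mathbf{x}_{k-1}+\mathbf{H}\mathbf{h}_k$, $\mathbf{y}_k=\mathbf{A}\mathbf{x}_k$, with inputs satisfying $\|\mathbf{h}_k\|_0\le s$. If the system is output $s$-sparse-controllable, then $s\ge m-\operatorname{rank}(\mathbf{A}\mathbf{D})$ and, for all $\lambda\in\mathbb{C}$, the matrix $\mathbf{A}\begin{bmatrix}\lambda\mathbf{I}-\mathbf{D} & \mathbf{H}\end{bmatrix}\in\mathbb{C}^{m\times(N+L)}$ has rank $m$.
   Context: $\|\cdot\|_0$ denotes the number of nonzero entries. The system is output $s$-sparse-controllable if for every initial state $\mathbf{x}_0\in\mathbb{R}^N$ and every desired output $\mathbf{y}\in\mathbb{R}^m$ there exist a finite $K$ and inputs $\mathbf{h}_1,\dots,\mathbf{h}_K\in\mathbb{R}^L$ with $\|\mathbf{h}_k\|_0\le s$ for all $k$ such that $\mathbf{y}_K=\mathbf{A}\mathbf{x}_K=\mathbf{y}$. *)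

From HB Require Import structures.
From mathcomp Require Import all_boot all_order all_algebra.
From mathcomp Require Import reals.
From mathcomp Require Export complex.
Set Implicit Arguments. Unset Strict Implicit. Unset Printing Implicit Defensive.
Import Order.TTheory GRing.Theory Num.Theory.
Local Open Scope ring_scope.

Definition l0norm (R : nzRingType) (L : nat) (h : 'cV[R]_L) : nat :=
  #|[set i : 'I_L | h i 0 != 0]|.

Definition final_state (R : nzRingType) (N L : nat) (D : 'M[R]_N) (H : 'M[R]_(N, L))
  (x0 : 'cV[R]_N) (hs : seq 'cV[R]_L) : 'cV[R]_N :=
  foldl (fun x h => D *m x + H *m h) x0 hs.

Definition output_sparse_controllable (R : nzRingType) (m N L : nat)
  (D : 'M[R]_N) (H : 'M[R]_(N, L)) (A : 'M[R]_(m, N)) (s : nat) : Prop :=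
  forall (x0 : 'cV[R]_N) (y : 'cV[R]_m),
    exists hs : seq 'cV[R]_L,
      [/\ (0 < size hs)%N,
          all (fun h => (l0norm h <= s)%N) hs
        & A *m final_state D H x0 hs = y].

Definition cmx (R : rcfType) (p q : nat) (M : 'M[R]_(p, q)) : 'M[complex R]_(p, q) :=
  map_mx (fun r : R => (r%:C)%C) M.

From HB Require Import structures.
From mathcomp Require Import all_boot all_order all_algebra.
From mathcomp Require Import reals complex.
Import Order.TTheory GRing.Theory Num.Theory.
Set Implicit Arguments. Unset Strict Implicit. Unset Printing Implicit Defensive.
Local Open Scope ring_scope.

(* If m > rank(AD) + s, an output whose last input is supported on S lies in
   the span of the columns of AD and of the columns of AH indexed by S.  These
   are finitely many proper subspaces of R^m, and they cannot cover R^m: a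
   nonzero functional vanishing on each one, evaluated on the moment curve
   (1, t, ..., t^(m-1)), is a nonzero polynomial in t, so some t avoids the
   roots of all of them.
   If A [lambda I - D, H] is rank deficient, a nonzero w in its left kernel
   makes z = w A a left eigenvector of D with z H = 0, so z x = 0 is preserved
   along every trajectory started at 0, and no output y with w y <> 0 is
   reachable. *)

Lemma final_state_rcons (R : nzRingType) N L (D : 'M[R]_N) (H : 'M[R]_(N, L))
    x0 hs h :
  final_state D H x0 (rcons hs h) = D *m final_state D H x0 hs + H *m h.
Proof. by rewrite /final_state foldl_rcons. Qed.

Lemma map_final_state (R S : nzRingType) (f : {rmorphism R -> S}) N L
    (D : 'M[R]_N) (H : 'M[R]_(N, L)) x0 hs :
  map_mx f (final_state D H x0 hs) =
  final_state (map_mx f D) (map_mx f H) (map_mx f x0) (map (map_mx f) hs).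
Proof.
elim: hs x0 => [|h hs IHhs] x0 //=.
by rewrite /final_state /= -/(final_state _ _ _ _) IHhs map_mxD !map_mxM.
Qed.

Lemma left_eigvec_final_state (R : comNzRingType) N L
    (D : 'M[R]_N) (H : 'M[R]_(N, L)) (z : 'rV_N) (a : R) x0 hs :
  z *m D = a *: z -> z *m H = 0 -> z *m x0 = 0 ->
  z *m final_state D H x0 hs = 0.
Proof.
move=> zD zH; elim: hs x0 => [|h hs IHhs] x0 zx0 //=; apply: IHhs.
by rewrite mulmxDr !mulmxA zD zH mul0mx addr0 -scalemxAl zx0 scaler0.
Qed.

Lemma row_freePn (F : fieldType) p q (M : 'M[F]_(p, q)) :
  reflect (exists2 w : 'rV_p, w != 0 & w *m M = 0) (~~ row_free M).
Proof.
rewrite -kermx_eq0; apply: (iffP rowV0Pn) => [[w /sub_kermxP wM w0]|[w w0 wM]].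
  by exists w.
by exists w => //; apply/sub_kermxP.
Qed.

Lemma exists_nonroot (R : numDomainType) (p : {poly R}) :
  p != 0 -> exists x, ~~ root p x.
Proof.
move=> p0; pose xs := mkseq (fun i => i%:R : R) (size p).
have /hasP[x _ px] : has (fun x => ~~ root p x) xs; last by exists x.
apply/hasPn => all_roots; case/eqP: p0; apply: (roots_geq_poly_eq0 (rs := xs)).
- by apply/allP => x /all_roots /negPn.
- by rewrite map_inj_uniq ?iota_uniq // => i j /eqP; rewrite eqr_nat => /eqP.
- by rewrite size_mkseq.
Qed.

Lemma horner_rVpoly_moment (R : comNzRingType) n (u : 'rV[R]_n) x :
  (rVpoly u).[x] = ((\row_(j < n) x ^+ j) *m u^T) 0 0.
Proof.
rewrite (horner_coef_wide _ (size_poly _ _)) mxE.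
by apply: eq_bigr => j _; rewrite coef_rVpoly_ord !mxE mulrC.
Qed.

Lemma exists_row_notin_proper_submx (R : numFieldType) (I : finType) p n
    (V : I -> 'M[R]_(p, n)) :
  (forall i, ~~ row_full (V i)) -> exists y : 'rV_n, forall i, ~~ (y <= V i)%MS.
Proof.
move=> Vproper.
have /fin_all_exists2[w w0 Vw] :
    forall i, exists2 w : 'rV_n, w != 0 & w *m (V i)^T = 0.
  move=> i; apply/row_freePn.
  by rewrite /row_free mxrank_tr; apply: Vproper.
have [t Pt] : exists t, ~~ root (\prod_i rVpoly (w i)) t.
  apply: exists_nonroot; rewrite prodf_seq_neq0; apply/allP => i _ /=.
  by apply: contra (w0 i) => /eqP wi0; rewrite -[w i]rVpolyK wi0 linear0.
exists (\row_j t ^+ j) => i; apply/negP => /submxP[X tX].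
move: Pt; rewrite /root horner_prod (bigD1 i) //= horner_rVpoly_moment tX.
by rewrite -mulmxA -[V i]trmxK -trmx_mul Vw trmx0 mulmx0 mxE mul0r eqxx.
Qed.

Section SparseOutputSpace.

Variables (R : fieldType) (m N L : nat).
Variables (D : 'M[R]_N) (H : 'M[R]_(N, L)) (A : 'M[R]_(m, N)).

Definition sparse_output_space (S : {set 'I_L}) : 'M[R]_m :=
  ((A *m D)^T + \sum_(i in S) <<(col i (A *m H))^T>>)%MS.

Lemma mxrank_sparse_output_space S :
  (\rank (sparse_output_space S) <= \rank (A *m D) + #|S|)%N.
Proof.
apply: leq_trans (leq_of_leqif (mxrank_adds_leqif _ _)) _.
rewrite mxrank_tr leq_add2l -sum1_card.
apply: leq_trans (leq_of_leqif (mxrank_sum_leqif _)) _ => /=.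
by apply: leq_sum => i _; rewrite genmxE rank_leq_row.
Qed.

Lemma output_step_sub_sparse_output_space (x : 'cV_N) (h : 'cV_L) :
  ((A *m (D *m x + H *m h))^T
     <= sparse_output_space [set i | h i 0 != 0])%MS.
Proof.
rewrite mulmxDr linearD /= !mulmxA (trmx_mul (A *m D)) (trmx_mul (A *m H)).
apply: addmx_sub_adds; first exact: submxMl.
rewrite mulmx_sum_row; apply: summx_sub => i _.
have [hi0|] := eqVneq (h i 0) 0; first by rewrite mxE hi0 scale0r sub0mx.
move=> hi_neq0; apply: scalemx_sub; apply: (sumsmx_sup i); first by rewrite inE.
by rewrite genmxE -tr_col.
Qed.

End SparseOutputSpace.

Lemma sparse_controllable_rank_bound (R : numFieldType) m N L s
    (D : 'M[R]_N) (H : 'M[R]_(N, L)) (A : 'M[R]_(m, N)) :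
  output_sparse_controllable D H A s -> (m - \rank (A *m D) <= s)%N.
Proof.
move=> ctrl; rewrite leqNgt ltn_subRL; apply/negP => rank_small.
pose V (S : {S : {set 'I_L} | (#|S| <= s)%N}) :=
  sparse_output_space D H A (val S).
have [y yV] : exists y : 'rV_m, forall S, ~~ (y <= V S)%MS.
  apply: exists_row_notin_proper_submx => -[S S_s]; apply/negP => /eqP full.
  have := mxrank_sparse_output_space D H A S.
  by rewrite full leqNgt (leq_ltn_trans _ rank_small) // leq_add2l.
have [hs [hs0 hs_sparse yhs]] := ctrl 0 y^T.
case/lastP: hs hs0 hs_sparse yhs => [//|hs h] _.
rewrite all_rcons final_state_rcons => /andP[h_s _] yhs.
have := yV (exist _ [set i | h i 0 != 0] h_s).
by rewrite -[y]trmxK -yhs output_step_sub_sparse_output_space.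
Qed.

Lemma sparse_controllable_full_rank_pencil (R : rcfType) m N L s
    (D : 'M[R]_N) (H : 'M[R]_(N, L)) (A : 'M[R]_(m, N)) :
  output_sparse_controllable D H A s ->
  forall lambda : complex R,
    \rank (cmx A *m row_mx (lambda%:M - cmx D) (cmx H)) = m.
Proof.
move=> ctrl lambda; apply/eqP; apply/negPn/row_freePn => -[w w0].
rewrite mulmxA mul_mx_row -row_mx0 => /eq_row_mx[wD wH].
have wAD : w *m cmx A *m cmx D = lambda *: (w *m cmx A).
  by move/eqP: wD; rewrite mulmxBr subr_eq0 mul_mx_scalar => /eqP.
have w_unreachable (y : 'cV[R]_m) : w *m cmx y = 0.
  have [hs [_ _ <-]] := ctrl 0 y.
  rewrite /cmx map_mxM mulmxA map_final_state.
  apply: left_eigvec_final_state wAD wH _.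
  by rewrite /cmx map_mx0 mulmx0.
case/eqP: w0; apply/rowP => j.
have /colP/(_ 0) := w_unreachable (delta_mx j 0).
by rewrite /cmx map_delta_mx -colE !mxE.
Qed.

Theorem corollary1 (R : realType) (m N L s : nat)
  (D : 'M[R]_N) (H : 'M[R]_(N, L)) (A : 'M[R]_(m, N)) :
  (0 < s)%N -> (s <= L)%N -> (m < N)%N ->
  output_sparse_controllable D H A s ->
  (m - \rank (A *m D) <= s)%N /\
  (forall lambda : complex R,
      \rank (cmx A *m row_mx (lambda%:M - cmx D) (cmx H)) = m).
Proof.
move=> _ _ _ ctrl; split.
  exact: sparse_controllable_rank_bound ctrl.
exact: sparse_controllable_full_rank_pencil ctrl.
Qed.
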